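(* Let $N\ge1$ and $\varphi,\psi\in\mathbb{C}^N$ be such that for $k=0,\ldots,2N-2$, $$\Big|P_\varphi\Big(\tfrac{k}{2N-1}\Big)\Big|=\Big|P_\psi\Big(\tfrac{k}{2N-1}\Big)\Big|\quad\text{and}\quad\Big|P_\varphi'\Big(\tfrac{k}{2N-1}\Big)\Big|=\Big|P_\psi'\Big(\tfrac{k}{2N-1}\Big)\Big|.$$ Then there exists $\lambda\in\mathbb{C}$ with $|\lambda|=1$ such that $\psi=\lambda\varphi$.
   Context: For $\psi=(\psi_0,\ldots,\psi_{N-1})\in\mathbb{C}^N$, $P_\psi(x)=\sum_{j=0}^{N-1}\psi_je^{2i\pi jx}$ for $x\in\mathbb{R}$, and $P_\psi'$ denotes its derivative in $x$. *)

From Stdlib Require Import Reals Lra.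
From Coquelicot Require Import Coquelicot.
Open Scope R_scope.

Definition cexp_i (t : R) : C := (cos t, sin t).

Fixpoint Psum (n : nat) (psi : nat -> C) (x : R) : C :=
  match n with
  | O => 0%C
  | S m => (Psum m psi x + psi m * cexp_i (2 * PI * INR m * x))%C
  end.

Definition P (N : nat) (psi : nat -> C) (x : R) : C := Psum N psi x.

Definition Pderiv (N : nat) (psi : nat -> C) (x : R) : C :=
  (Derive (fun t => Re (P N psi t)) x, Derive (fun t => Im (P N psi t)) x).

(* Write p for the polynomial with coefficients phi_0, ..., phi_(N-1), p~ for its reversed
   conjugate X^(N-1) conj(p)(1/X), and theta = X d/dX, so that (theta p)~ = (N-1) p~ - theta p~.
   At z = e^(2 i pi x) on the unit circle, (p p~)(z) = z^(N-1) |P(x)|^2 and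
   (theta p (theta p)~)(z) = z^(N-1) |P'(x)|^2 / (4 pi^2); both are polynomials of degree at most
   2N-2, so the 2N-1 samples determine them.  Then u = theta p * p~ and v = p * (theta p)~ satisfy
   u - v = theta (p p~) - (N-1) p p~ and u v = p p~ * theta p (theta p)~, both determined by the
   data; so for the coefficients psi, with polynomial q, either u = u_q, in which case p and q have
   the same logarithmic derivative and q = c p, or u_q = -v, in which case a leading-coefficient
   count forces p and q to be constant.  Finally p p~ = q q~ gives |c| = 1. *)

From Stdlib Require Import Reals Lra Lia.
From Coquelicot Require Import Coquelicot.
From mathcomp Require Import all_boot all_algebra.
From mathcomp Require Import Rstruct complex.

Set Implicit Arguments.
Unset Strict Implicit.
Import GRing.Theory Num.Theory.

Local Open Scope R_scope.

Fixpoint Psum_deriv (n : nat) (psi : nat -> C) (x : R) : C :=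
  match n with
  | O => RtoC 0
  | S m => Cplus (Psum_deriv m psi x)
                 (Cmult (psi m) (Cmult (0, 2 * PI * INR m) (cexp_i (2 * PI * INR m * x))))
  end.

Lemma is_derive_Re_Psum n psi x :
  is_derive (fun t => (Psum n psi t).1) x (Psum_deriv n psi x).1.
Proof.
elim: n => [|n IH] /=; first exact: is_derive_const.
apply: is_derive_plus; first exact: IH.
set c := 2 * PI * INR n.
apply: (is_derive_ext (fun t => (psi n).1 * cos (c * t) - (psi n).2 * sin (c * t))) => [t|].
  by rewrite /cexp_i /= /c.
by rewrite /cexp_i /= -/c; auto_derive; [|ring].
Qed.

Lemma is_derive_Im_Psum n psi x :
  is_derive (fun t => (Psum n psi t).2) x (Psum_deriv n psi x).2.
Proof.
elim: n => [|n IH] /=; first exact: is_derive_const.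
apply: is_derive_plus; first exact: IH.
set c := 2 * PI * INR n.
apply: (is_derive_ext (fun t => (psi n).1 * sin (c * t) + (psi n).2 * cos (c * t))) => [t|].
  by rewrite /cexp_i /= /c.
by rewrite /cexp_i /= -/c; auto_derive; [|ring].
Qed.

Lemma Pderiv_Psum_deriv N psi x : Pderiv N psi x = Psum_deriv N psi x.
Proof.
rewrite /Pderiv /P (is_derive_unique _ _ _ (is_derive_Re_Psum N psi x)).
by rewrite (is_derive_unique _ _ _ (is_derive_Im_Psum N psi x)); case: (Psum_deriv N psi x).
Qed.

Lemma cos_lt_1 t : 0 < t < 2 * PI -> cos t < 1.
Proof.
move=> t_bounds; have -> : t = 2 * (t / 2) by field.
have : 0 < sin (t / 2) by apply: sin_gt_0; lra.
rewrite cos_2a_sin; nra.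
Qed.

Lemma cexp_i_sample_inj (M k l : nat) : (k < M)%coq_nat -> (l < M)%coq_nat ->
  cexp_i (2 * PI * (INR k / INR M)) = cexp_i (2 * PI * (INR l / INR M)) -> k = l.
Proof.
wlog le_kl : k l / (k <= l)%coq_nat => [wlog_kl lt_kM lt_lM eq_kl|_ lt_lM].
  by case: (Nat.le_ge_cases k l) => ?; [|symmetry]; apply: wlog_kl.
set s := 2 * PI * (INR k / INR M); set t := 2 * PI * (INR l / INR M).
case=> cos_eq sin_eq; apply: Nat.le_antisymm => //; apply/Nat.nlt_ge => lt_kl.
have : cos (t - s) = 1.
  by rewrite cos_minus -cos_eq -sin_eq; have := sin2_cos2 s; rewrite /Rsqr; lra.
suff : cos (t - s) < 1 by lra.
have M_gt0 : 0 < INR M by apply: lt_0_INR; lia.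
have [lt_kl' lt_lM'] : INR k < INR l /\ INR l < INR M by split; apply: lt_INR.
have k_ge0 := pos_INR k; have PI_gt0 := PI_RGT_0.
have -> : t - s = 2 * PI * ((INR l - INR k) / INR M) by rewrite /s /t; field; lra.
set u := (INR l - INR k) / INR M.
have uM : u * INR M = INR l - INR k by rewrite /u; field; lra.
by apply: cos_lt_1; split; nra.
Qed.

Lemma cexp_i_add s t : cexp_i (s + t) = Cmult (cexp_i s) (cexp_i t).
Proof. by rewrite /cexp_i /Cmult /= cos_plus sin_plus; f_equal; ring. Qed.

Lemma Cmod_cexp_i t : Cmod (cexp_i t) = 1.
Proof.
rewrite /Cmod /cexp_i /= !Rmult_1_r Rplus_comm.
by have := sin2_cos2 t; rewrite /Rsqr => ->; exact: sqrt_1.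
Qed.

Lemma two_PI_neq0 : 2 * PI <> 0.
Proof. by have := PI_RGT_0; lra. Qed.

Lemma Cmod_2PI_i : Cmod (0, 2 * PI) = 2 * PI.
Proof.
rewrite /Cmod /= Rmult_0_l Rplus_0_l Rmult_1_r sqrt_square //.
by have := PI_RGT_0; lra.
Qed.

From mathcomp Require Import ring zify.
Local Open Scope ring_scope.

Lemma eq_sub_mul_cases (R : idomainType) (u v u' v' : R) :
  u - v = u' - v' -> u * v = u' * v' -> u = u' \/ u' = - v.
Proof.
move=> eq_diff eq_mul.
have : (u - u') * (u' + v) = 0.
  transitivity (u' * ((u - v) - (u' - v')) + (u * v - u' * v')); first ring.
  by rewrite eq_diff eq_mul !subrr mulr0 addr0.
move/eqP; rewrite mulf_eq0 subr_eq0 addr_eq0 => /orP[] /eqP; by [left | right].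
Qed.

Section EulerOperator.
Variable F : numFieldType.
Implicit Types f g r : {poly F}.

(* On the unit circle z = e^(2 i pi x), d/dx p(z) = 2 i pi (euler_op p)(z). *)
Definition euler_op f := 'X * f^`().

Lemma coef_euler_op f j : (euler_op f)`_j = j%:R * f`_j.
Proof.
rewrite /euler_op coefXM; case: j => [|j] /=; first by rewrite mul0r.
by rewrite coef_deriv mulr_natl.
Qed.

Lemma euler_opM f g : euler_op (f * g) = euler_op f * g + f * euler_op g.
Proof. rewrite /euler_op derivM; ring. Qed.

Lemma euler_opB f g : euler_op (f - g) = euler_op f - euler_op g.
Proof. by rewrite /euler_op derivB mulrBr. Qed.

Lemma euler_opZ c f : euler_op (c%:P * f) = c%:P * euler_op f.
Proof. by rewrite /euler_op derivM derivC mul0r add0r mulrCA. Qed.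

Lemma euler_op_eq0 f : (euler_op f == 0) = (size f <= 1)%N.
Proof.
apply/eqP/idP => [f_eq0 | /size1_polyC ->]; last by rewrite /euler_op derivC mulr0.
apply/leq_sizeP => j; case: j => // j _.
have /eqP := congr1 (fun h : {poly F} => h`_j.+1) f_eq0.
by rewrite /= coef_euler_op coef0 mulf_eq0 pnatr_eq0 => /eqP.
Qed.

Lemma coef_mul_top f g : f != 0 -> g != 0 ->
  (f * g)`_((size f).-1 + (size g).-1) = lead_coef f * lead_coef g.
Proof.
move=> f_neq0 g_neq0; rewrite -lead_coefM /lead_coef size_mul //.
move: f_neq0 g_neq0; rewrite -!size_poly_gt0.
by case: (size f) (size g) => [|m] [|n] //= _ _; rewrite addnS.
Qed.

Lemma size_euler_op_sub f : (size (euler_op f - ((size f).-1)%:R%:P * f)%R <= (size f).-1)%N.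
Proof.
apply/leq_sizeP => j le_j; rewrite coefB coefCM coef_euler_op.
case: (ltngtP j (size f).-1) => [|lt_j|->]; [lia | | by rewrite subrr].
by rewrite nth_default ?mulr0 ?subr0 //; move: lt_j; case: (size f).
Qed.

Lemma coef_euler_opM_top f g : f != 0 -> g != 0 ->
  (euler_op f * g)`_((size f).-1 + (size g).-1) = (size f).-1%:R * (lead_coef f * lead_coef g).
Proof.
move=> f_neq0 g_neq0; set d := (size f).-1.
have -> : euler_op f * g = d%:R%:P * (f * g) + (euler_op f - d%:R%:P * f) * g by ring.
rewrite coefD coefCM coef_mul_top // nth_default ?addr0 //.
apply: leq_trans (size_polyMleq _ _) _; have := size_euler_op_sub f.
by move: g_neq0; rewrite -size_poly_gt0 -/d; lia.
Qed.

Lemma size_euler_wronskian p r : p != 0 -> r != 0 ->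
  euler_op p * r = euler_op r * p -> size r = size p.
Proof.
move=> p_neq0 r_neq0 /(congr1 (fun h : {poly F} => h`_((size p).-1 + (size r).-1))).
rewrite /= coef_euler_opM_top // addnC coef_euler_opM_top // [lead_coef r * _]mulrC.
move/eqP; rewrite -subr_eq0 -mulrBl mulf_eq0 mulf_eq0 !lead_coef_eq0.
rewrite (negPf p_neq0) (negPf r_neq0) !orbF subr_eq0 eqr_nat => /eqP.
by move: p_neq0 r_neq0; rewrite -!size_poly_gt0; case: (size p) (size r) => [|m] [|n] // _ _ /= ->.
Qed.

(* Equal logarithmic derivatives: [r - c p] satisfies the same Wronskian identity
   but has a smaller degree than [p], so it vanishes. *)
Lemma euler_wronskian_scale p r : p != 0 ->
  euler_op p * r = euler_op r * p -> r = (lead_coef r / lead_coef p)%:P * p.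
Proof.
move=> p_neq0 wr; set c := lead_coef r / lead_coef p.
apply/eqP; rewrite -subr_eq0; apply/negPn/negP => s_neq0.
have wr_s : euler_op p * (r - c%:P * p) = euler_op (r - c%:P * p) * p.
  by rewrite euler_opB euler_opZ mulrBr mulrBl wr; ring.
have size_s : size (r - c%:P * p) = size p by exact: size_euler_wronskian.
have r_neq0 : r != 0.
  by apply: contraNneq s_neq0 => r_eq0; rewrite /c r_eq0 lead_coef0 mul0r polyC0 mul0r subrr.
have size_r : size r = size p by exact: size_euler_wronskian.
suff : (size (r - c%:P * p)%R <= (size p).-1)%N.
  by rewrite size_s; move: p_neq0; rewrite -size_poly_gt0; lia.
apply/leq_sizeP => j le_j; rewrite coefB coefCM.
case: (ltngtP j (size p).-1) => [|lt_j|->]; first lia.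
  by rewrite !nth_default ?mulr0 ?subr0 // ?size_r; move: lt_j; case: (size p).
have -> : r`_(size p).-1 = lead_coef r by rewrite /lead_coef size_r.
by rewrite /c divfK ?subrr ?lead_coef_eq0.
Qed.

Lemma size_euler_cross_le1 (n : nat) (q p' : {poly F}) : q != 0 -> p' != 0 -> ((size p').-1 <= n)%N ->
  euler_op q * p' + (n%:R%:P * p' - euler_op p') * q = 0 -> (size q <= 1)%N.
Proof.
move=> q_neq0 p'_neq0 size_p' /(congr1 (fun h : {poly F} => h`_((size q).-1 + (size p').-1))).
rewrite /= coef0 coefD mulrBl coefB -[_%:P * p' * q]mulrA coefCM coef_euler_opM_top //.
rewrite addnC coef_euler_opM_top // coef_mul_top // [lead_coef p' * _]mulrC -mulrBl -mulrDl.
move/eqP; rewrite mulf_eq0 mulf_eq0 !lead_coef_eq0 (negPf q_neq0) (negPf p'_neq0) !orbF.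
by rewrite -natrB // -natrD pnatr_eq0 addn_eq0 => /andP[/eqP + _]; case: (size q) => [|[]].
Qed.

End EulerOperator.

Section Autocorrelation.
Variable F : numClosedFieldType.
Implicit Types (N : nat) (a b : nat -> F) (c z : F).

Definition poly_of N a : {poly F} := \poly_(j < N) a j.

Definition rev_conj_poly N a : {poly F} := \poly_(j < N) (a (N.-1 - j)%N)^*.

Definition autocorr N a := poly_of N a * rev_conj_poly N a.

Definition deriv_coefs a j := j%:R * a j.

Lemma poly_of_deriv_coefs N a : poly_of N (deriv_coefs a) = euler_op (poly_of N a).
Proof.
apply/polyP => i; rewrite coef_euler_op !coef_poly.
by case: ifP; rewrite ?mulr0.
Qed.

Lemma rev_conj_poly_deriv_coefs N a : rev_conj_poly N (deriv_coefs a) =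
  (N.-1)%:R%:P * rev_conj_poly N a - euler_op (rev_conj_poly N a).
Proof.
apply/polyP => i; rewrite coefB coefCM coef_euler_op !coef_poly.
case: ifP => lt_iN; last by rewrite !mulr0 subr0.
by rewrite rmorphM rmorph_nat natrB ?mulrBl //; lia.
Qed.

Lemma horner_rev_conj_poly N a z : `|z| = 1 ->
  (rev_conj_poly N a).[z] = z ^+ N.-1 * ((poly_of N a).[z])^*.
Proof.
move=> z_norm; have z_unit : z * z^* = 1 by rewrite -normCK z_norm expr1n.
rewrite !horner_poly rmorph_sum mulr_sumr.
rewrite (reindex_inj rev_ord_inj); apply: eq_bigr => i _ /=.
have lt_iN := ltn_ord i.
have -> : (N.-1 - (N - i.+1) = i)%N by lia.
have -> : N.-1 = (N - i.+1 + i)%N by lia.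
rewrite rmorphM rmorphXn exprD -[LHS]mulr1 -(expr1n _ i) -z_unit exprMn; ring.
Qed.

Lemma horner_autocorr N a z : `|z| = 1 ->
  (autocorr N a).[z] = z ^+ N.-1 * `|(poly_of N a).[z]| ^+ 2.
Proof. by move=> z_norm; rewrite hornerM horner_rev_conj_poly // mulrCA normCK. Qed.

Lemma size_autocorr N a : (size (autocorr N a) <= (N + N).-1)%N.
Proof.
apply: leq_trans (size_polyMleq _ _) _.
by rewrite -!subn1 leq_sub2r // leq_add // size_poly.
Qed.

Lemma poly_of_eq0P N a : reflect (forall j, (j < N)%N -> a j = 0) (poly_of N a == 0).
Proof.
apply: (iffP eqP) => [p_eq0 j lt_jN | a_eq0].
  by have := congr1 (fun h : {poly F} => h`_j) p_eq0; rewrite /= coef_poly lt_jN coef0.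
by apply/polyP => i; rewrite coef_poly coef0; case: ifP => // /a_eq0.
Qed.

Lemma rev_conj_poly_eq0 N a : (rev_conj_poly N a == 0) = (poly_of N a == 0).
Proof.
apply/poly_of_eq0P/poly_of_eq0P => a_eq0 j lt_jN.
  have := a_eq0 (N.-1 - j)%N; rewrite subKn; last by lia.
  by move/(_ _)/eqP; rewrite conjC_eq0 => /(_ _)/eqP; apply; lia.
by rewrite a_eq0 ?conjC0 //; lia.
Qed.

Lemma poly_of_scale_coef N a b c : poly_of N b = c%:P * poly_of N a ->
  forall j, (j < N)%N -> b j = c * a j.
Proof.
move=> eq_bc j lt_jN.
by have := congr1 (fun h : {poly F} => h`_j) eq_bc; rewrite /= coefCM !coef_poly lt_jN.
Qed.

Lemma rev_conj_poly_scale N a b c : poly_of N b = c%:P * poly_of N a ->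
  rev_conj_poly N b = c^*%:P * rev_conj_poly N a.
Proof.
move=> /poly_of_scale_coef b_ca; apply/polyP => i; rewrite coefCM !coef_poly.
by case: ifP => lt_iN; rewrite ?mulr0 // b_ca ?rmorphM //; lia.
Qed.

Lemma autocorr_scale N a b c : poly_of N b = c%:P * poly_of N a ->
  autocorr N b = (c * c^*)%:P * autocorr N a.
Proof. by move=> eq_bc; rewrite /autocorr (rev_conj_poly_scale eq_bc) eq_bc polyCM; ring. Qed.

End Autocorrelation.

Section PhaseRetrieval.
Variables (F : numClosedFieldType) (N : nat) (a b : nat -> F).
Local Notation p := (poly_of N a).
Local Notation p' := (rev_conj_poly N a).
Local Notation q := (poly_of N b).
Local Notation q' := (rev_conj_poly N b).
Local Notation k := ((N.-1)%:R%:P : {poly F}).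
Hypothesis autocorr_eq : autocorr N a = autocorr N b.
Hypothesis autocorr_deriv_eq : autocorr N (deriv_coefs a) = autocorr N (deriv_coefs b).

Let euler_cross_eq :
  euler_op p * (k * p' - euler_op p') = euler_op q * (k * q' - euler_op q').
Proof. by move: autocorr_deriv_eq; rewrite /autocorr !poly_of_deriv_coefs !rev_conj_poly_deriv_coefs. Qed.

Lemma scale_of_euler_cross_eq : p != 0 -> euler_op p * p' = euler_op q * q' ->
  exists c, q = c%:P * p.
Proof.
move=> p_neq0 cross_eq; exists (lead_coef q / lead_coef p); apply: euler_wronskian_scale => //.
have p'_neq0 : p' != 0 by rewrite rev_conj_poly_eq0.
apply: (mulfI p'_neq0); transitivity (euler_op p * p' * q); first ring.
by rewrite cross_eq -mulrA [q' * q]mulrC -/(autocorr N b) -autocorr_eq /autocorr; ring.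
Qed.

Lemma scale_of_euler_cross_opp : p != 0 ->
  euler_op q * q' + p * (k * p' - euler_op p') = 0 -> exists c, q = c%:P * p.
Proof.
move=> p_neq0 cross_opp.
have p'_neq0 : p' != 0 by rewrite rev_conj_poly_eq0.
have q_neq0 : q != 0.
  apply: contraNneq (mulf_neq0 p_neq0 p'_neq0) => q_eq0.
  by rewrite -/(autocorr _ _) autocorr_eq /autocorr q_eq0 mul0r.
have size_q : (size q <= 1)%N.
  apply: (size_euler_cross_le1 (n := N.-1) q_neq0 p'_neq0).
    by rewrite -!subn1 leq_sub2r // size_poly.
  apply: (mulfI p_neq0); rewrite mulr0 -(mulr0 q) -cross_opp; move: autocorr_eq; rewrite /autocorr => eq_pq.
  transitivity (euler_op q * (p * p') + p * (k * p' - euler_op p') * q); first ring.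
  by rewrite eq_pq; ring.
have size_p : (size p <= 1)%N.
  have dq_eq0 : euler_op q = 0 by apply/eqP; rewrite euler_op_eq0.
  have : euler_op p * (k * p' - euler_op p') == 0 by rewrite euler_cross_eq dq_eq0 mul0r.
  rewrite -rev_conj_poly_deriv_coefs mulf_eq0 rev_conj_poly_eq0 poly_of_deriv_coefs orbb.
  by rewrite euler_op_eq0.
move: (size1_polyC size_p) (size1_polyC size_q) p_neq0.
set p0 := p`_0; set q0 := q`_0 => -> -> p0_neq0.
exists (q0 / p0); rewrite -polyCM divfK //.
by apply: contraNneq p0_neq0 => ->.
Qed.

Lemma scale_of_nonzero : p != 0 -> exists c, q = c%:P * p.
Proof.
move=> p_neq0.
have [cross_eq|cross_opp] : euler_op p * p' = euler_op q * q' \/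
                  euler_op q * q' = - (p * (k * p' - euler_op p')).
  apply: eq_sub_mul_cases.
    have diff_autocorr u : euler_op (poly_of N u) * rev_conj_poly N u
        - poly_of N u * (k * rev_conj_poly N u - euler_op (rev_conj_poly N u))
        = euler_op (autocorr N u) - k * autocorr N u.
      by rewrite /autocorr euler_opM; ring.
    by rewrite !diff_autocorr autocorr_eq.
  transitivity (autocorr N a * (euler_op p * (k * p' - euler_op p'))); first by rewrite /autocorr; ring.
  by rewrite euler_cross_eq autocorr_eq /autocorr; ring.
- exact: scale_of_euler_cross_eq.
- by apply: scale_of_euler_cross_opp => //; rewrite cross_opp addNr.
Qed.

Theorem poly_phase_retrieval :
  exists c, `|c| = 1 /\ forall j, (j < N)%N -> b j = c * a j.
Proof.
have [p_eq0 | p_neq0] := eqVneq p 0.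
  have q_eq0 : q = 0.
    apply/eqP; move: autocorr_eq; rewrite /autocorr p_eq0 mul0r => /esym/eqP.
    by rewrite mulf_eq0 rev_conj_poly_eq0 orbb.
  exists 1; split; first exact: normr1.
  by apply: poly_of_scale_coef; rewrite q_eq0 p_eq0 mulr0.
have [c q_eq] := scale_of_nonzero p_neq0.
exists c; split; last exact: poly_of_scale_coef.
have autocorr_neq0 : autocorr N a != 0 by rewrite mulf_neq0 // rev_conj_poly_eq0.
apply/eqP; rewrite -(@eqrXn2 _ 2) // expr1n normCK; apply/eqP/polyC_inj.
apply: (mulIf autocorr_neq0).
by rewrite polyC1 mul1r -(autocorr_scale q_eq) autocorr_eq.
Qed.

End PhaseRetrieval.

Local Open Scope complex_scope.

Definition CtoRi (z : C) : R[i] := z.1 +i* z.2.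

Lemma CtoRiD z w : CtoRi (Cplus z w) = CtoRi z + CtoRi w.
Proof. by case: z w => [? ?] [? ?]. Qed.

Lemma CtoRiM z w : CtoRi (Cmult z w) = CtoRi z * CtoRi w.
Proof.
case: z w => [a b] [c d]; apply/eqP; rewrite eq_complex /= !RealsE.
by apply/andP; split; apply/eqP; ring.
Qed.

Lemma CtoRi_inj : injective CtoRi.
Proof. by case=> [? ?] [? ?] [-> ->]. Qed.

Lemma CtoRi_ReIm (c : R[i]) : CtoRi (complex.Re c, complex.Im c) = c.
Proof. by case: c. Qed.

Lemma CtoRi_nat n : CtoRi (RtoC (INR n)) = n%:R.
Proof. by rewrite /CtoRi /= INRE -(rmorph_nat (real_complex R)). Qed.

Lemma normc_CtoRi z : `|CtoRi z| = (Cmod z)%:C.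
Proof. by case: z => a b; rewrite /Cmod RsqrtE !RpowE. Qed.

Definition zeta (x : R) : R[i] := CtoRi (cexp_i (2 * PI * x)).

Lemma norm_zeta x : `|zeta x| = 1.
Proof. by rewrite normc_CtoRi Cmod_cexp_i. Qed.

Lemma zetaX x m : zeta x ^+ m = CtoRi (cexp_i (2 * PI * INR m * x)).
Proof.
elim: m => [|m IH]; first by rewrite expr0 /= Rmult_0_r Rmult_0_l /cexp_i cos_0 sin_0.
rewrite exprSr IH -CtoRiM -cexp_i_add S_INR.
by rewrite Rmult_plus_distr_l Rmult_1_r Rmult_plus_distr_r.
Qed.

Lemma CtoRi_Psum n psi x : CtoRi (Psum n psi x) = (poly_of n (CtoRi \o psi)).[zeta x].
Proof.
rewrite horner_poly; elim: n => [|n IH]; first by rewrite big_ord0.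
by rewrite big_ord_recr /= CtoRiD CtoRiM IH zetaX.
Qed.

Lemma CtoRi_Psum_deriv n psi x : CtoRi (Psum_deriv n psi x) =
  CtoRi (0, 2 * PI) * (poly_of n (deriv_coefs (CtoRi \o psi))).[zeta x].
Proof.
rewrite horner_poly mulr_sumr; elim: n => [|n IH]; first by rewrite big_ord0.
rewrite big_ord_recr /= CtoRiD !CtoRiM IH zetaX; congr (_ + _).
have -> : CtoRi (0, 2 * PI * INR n) = CtoRi (0, 2 * PI) * n%:R.
  by rewrite -CtoRi_nat -CtoRiM /Cmult /RtoC /= !Rmult_0_l Rmult_0_r Rminus_0_r Rplus_0_l.
by rewrite /deriv_coefs /=; ring.
Qed.

Lemma norm_horner_P N psi x :
  `|(poly_of N (CtoRi \o psi)).[zeta x]| = (Cmod (P N psi x))%:C.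
Proof. by rewrite -CtoRi_Psum normc_CtoRi. Qed.

Lemma norm_horner_Pderiv N psi x :
  `|(poly_of N (deriv_coefs (CtoRi \o psi))).[zeta x]| = (Cmod (Pderiv N psi x))%:C / (2 * PI)%:C.
Proof.
rewrite Pderiv_Psum_deriv -normc_CtoRi CtoRi_Psum_deriv normrM.
by rewrite normc_CtoRi Cmod_2PI_i mulrC mulKf // fmorph_eq0; apply/eqP; exact: two_PI_neq0.
Qed.

Lemma eq_poly_on_samples (M : nat) (f g : {poly R[i]}) : (size f <= M)%N -> (size g <= M)%N ->
  (forall k, (k < M)%N -> f.[zeta (INR k / INR M)] = g.[zeta (INR k / INR M)]) -> f = g.
Proof.
move=> size_f size_g eq_fg; apply/eqP; rewrite -subr_eq0; apply: contraT => fg_neq0.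
have size_fg : (size (f - g)%R <= M)%N.
  by apply: leq_trans (size_polyD _ _) _; rewrite size_polyN geq_max size_f size_g.
have := max_poly_roots fg_neq0 (rs := [seq zeta (INR k / INR M) | k <- iota 0 M]).
rewrite size_map size_iota ltnNge size_fg; apply.
  apply/allP => z /mapP[k]; rewrite mem_iota add0n => /andP[_ lt_kM] ->.
  by rewrite /root hornerD hornerN eq_fg ?subrr.
rewrite map_inj_in_uniq ?iota_uniq // => k l; rewrite !mem_iota !add0n => /andP[_ lt_kM] /andP[_ lt_lM].
by move/CtoRi_inj; apply: cexp_i_sample_inj; apply/ltP.
Qed.

Lemma autocorr_eq_of_samples (N M : nat) (a b : nat -> R[i]) : ((N + N).-1 <= M)%N ->
  (forall k, (k < M)%N ->
     `|(poly_of N a).[zeta (INR k / INR M)]| = `|(poly_of N b).[zeta (INR k / INR M)]|) ->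
  autocorr N a = autocorr N b.
Proof.
move=> le_NM eq_norm; apply: eq_poly_on_samples => [||k lt_kM].
- exact: leq_trans (size_autocorr _ _) le_NM.
- exact: leq_trans (size_autocorr _ _) le_NM.
by rewrite !horner_autocorr ?norm_zeta // eq_norm.
Qed.

Local Close Scope complex_scope.
Local Close Scope ring_scope.
Unset Implicit Arguments.

Theorem mainTheorem9 (N : nat) (phi psi : nat -> C) :
  (1 <= N)%coq_nat ->
  (forall k : nat, (k <= Nat.sub (Nat.mul 2 N) 2)%coq_nat ->
     Cmod (P N phi (Rdiv (INR k) (INR (Nat.sub (Nat.mul 2 N) 1)))) = Cmod (P N psi (Rdiv (INR k) (INR (Nat.sub (Nat.mul 2 N) 1))))
     /\ Cmod (Pderiv N phi (Rdiv (INR k) (INR (Nat.sub (Nat.mul 2 N) 1))))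
        = Cmod (Pderiv N psi (Rdiv (INR k) (INR (Nat.sub (Nat.mul 2 N) 1))))) ->
  exists lambda : C, Cmod lambda = 1 /\ forall j : nat, (j < N)%coq_nat -> psi j = Cmult lambda (phi j).
Proof.
move=> N_gt0 sampled_eq.
have le_NM : ((N + N).-1 <= Nat.sub (Nat.mul 2 N) 1)%N by apply/leP; lia.
have sample_index k : (k < Nat.sub (Nat.mul 2 N) 1)%N -> (k <= Nat.sub (Nat.mul 2 N) 2)%coq_nat.
  by move/ltP; lia.
have autocorr_eq : autocorr N (CtoRi \o phi) = autocorr N (CtoRi \o psi).
  apply: autocorr_eq_of_samples le_NM _ => k /sample_index /sampled_eq[P_eq _].
  by rewrite !norm_horner_P P_eq.
have autocorr_deriv_eq :
    autocorr N (deriv_coefs (CtoRi \o phi)) = autocorr N (deriv_coefs (CtoRi \o psi)).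
  apply: autocorr_eq_of_samples le_NM _ => k /sample_index /sampled_eq[_ dP_eq].
  by rewrite !norm_horner_Pderiv dP_eq.
have [c [c_norm psi_eq]] := poly_phase_retrieval autocorr_eq autocorr_deriv_eq.
exists (complex.Re c, complex.Im c); split.
  by move: c_norm; rewrite -(CtoRi_ReIm c) normc_CtoRi; case.
move=> j lt_jN; apply: CtoRi_inj; rewrite CtoRiM CtoRi_ReIm; exact/psi_eq/ltP.
Qed.
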